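(* Let $G$ be a finitely generated group that contains no free subsemigroup on two generators, and let $N$ be a normal subgroup of $G$ such that the quotient $G/N$ is an elementary amenable group. Then $N$ is finitely generated.
   Context: The class of elementary amenable groups is the smallest class of groups containing all finite groups and all abelian groups and closed under taking subgroups, taking quotient groups, extensions (if $K\trianglelefteq L$ with $K$ and $L/K$ in the class then $L$ is in the class), and directed unions. *)

From Stdlib Require Import List.
Import ListNotations.

Record group := Group {
  gcar :> Type;
  gmul : gcar -> gcar -> gcar;
  ginv : gcar -> gcar;
  gone : gcar;
  gmulA : forall x y z, gmul x (gmul y z) = gmul (gmul x y) z;
  gmul1l : forall x, gmul gone x = x;
  gmulVl : forall x, gmul (ginv x) x = gone
}.

Arguments gmul {g}.
Arguments ginv {g}.
Arguments gone {g}.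

Definition is_hom (G H : group) (f : G -> H) : Prop :=
  forall x y : G, f (gmul x y) = gmul (f x) (f y).

Definition injective {A B : Type} (f : A -> B) : Prop :=
  forall x y, f x = f y -> x = y.

Definition surjective {A B : Type} (f : A -> B) : Prop :=
  forall y, exists x, f x = y.

Definition finite_group (G : group) : Prop :=
  exists l : list G, forall x : G, In x l.

Definition abelian_group (G : group) : Prop :=
  forall x y : G, gmul x y = gmul y x.

(* Subgroups/quotients are taken up to isomorphism
   (injective / surjective homomorphisms); in particular the class is closed
   under isomorphism. *)
Inductive elem_amenable : group -> Prop :=
| EA_finite : forall G, finite_group G -> elem_amenable G
| EA_abelian : forall G, abelian_group G -> elem_amenable G
| EA_sub : forall (G H : group) (f : H -> G),
    is_hom H G f -> injective f -> elem_amenable G -> elem_amenable H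
| EA_quot : forall (G Q : group) (f : G -> Q),
    is_hom G Q f -> surjective f -> elem_amenable G -> elem_amenable Q
| EA_ext : forall (K L Q : group) (i : K -> L) (p : L -> Q),
    is_hom K L i -> injective i -> is_hom L Q p -> surjective p ->
    (forall x : L, p x = gone <-> exists k, i k = x) ->
    elem_amenable K -> elem_amenable Q -> elem_amenable L
| EA_union : forall (L : group) (I : Type) (H : I -> group)
      (e : forall i, H i -> L),
    (forall i, is_hom (H i) L (e i)) -> (forall i, injective (e i)) ->
    (forall i j, exists k,
        (forall y, exists z, e k z = e i y) /\
        (forall y, exists z, e k z = e j y)) ->
    (forall x : L, exists i y, e i y = x) ->
    (forall i, elem_amenable (H i)) -> elem_amenable L.

Definition is_subgroup (G : group) (P : G -> Prop) : Prop :=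
  P gone /\ (forall x y, P x -> P y -> P (gmul x y)) /\ (forall x, P x -> P (ginv x)).

Definition is_normal (G : group) (N : G -> Prop) : Prop :=
  is_subgroup G N /\ forall g x, N x -> N (gmul (ginv g) (gmul x g)).

Definition generated (G : group) (S : G -> Prop) (x : G) : Prop :=
  forall P, is_subgroup G P -> (forall s, S s -> P s) -> P x.

Definition fin_gen (G : group) : Prop :=
  exists l : list G, forall x : G, generated G (fun s => In s l) x.

Definition fin_gen_subgroup (G : group) (N : G -> Prop) : Prop :=
  exists l : list G, (forall s, In s l -> N s) /\
    forall x : G, N x <-> generated G (fun s => In s l) x.

(* free subsemigroup on two generators a, b: the evaluation map from nonempty
   words over {a,b} (first letter, remaining letters) is injective *)
Definition word_val (G : group) (a b : G) (w : bool * list bool) : G :=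
  let letter (c : bool) := if c then a else b in
  fold_left (fun acc c => gmul acc (letter c)) (snd w) (letter (fst w)).

Definition has_free_subsemigroup2 (G : group) : Prop :=
  exists a b : G, injective (word_val G a b).

Definition quotient_elem_amenable (G : group) (N : G -> Prop) : Prop :=
  exists (Q : group) (f : G -> Q), is_hom G Q f /\ surjective f /\
    (forall x, N x <-> f x = gone) /\ elem_amenable Q.

From Stdlib Require Import List Lia ZArith Classical ClassicalEpsilon.
Import ListNotations.

(* Call [Q] good when, in every group without free subsemigroups, the kernel
   of a homomorphism from a finitely generated subgroup to [Q] is finitely
   generated.  Finite groups are good by Schreier's lemma (the kernel has
   finite index).  For abelian [Q] the kernel contains all commutators, so it
   is reached from a finitely generated group by finitely many cyclic
   extensions [D <| D<s>]; if a power of [s] lies in [D] the index is finite,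
   and otherwise non-injectivity of words in [b · s] and [s] expresses any
   [b] in [D] through finitely many of its [s]-conjugates, so a finite window
   of conjugates of finitely many elements generates [D].  Goodness passes
   to subgroups, quotients, extensions and directed unions, hence every
   elementary amenable group is good, and [N] is the kernel of [G -> G/N]. *)

Local Infix "·" := gmul (at level 40, left associativity).
Local Notation "x ⁻¹" := (ginv x) (at level 3, format "x ⁻¹").
Local Notation "<< S >>" := (generated _ S) (format "<< S >>").

Lemma list_choice {X Y : Type} (P : Y -> Prop) (R : X -> Y -> Prop) (l : list X) :
  (forall a, In a l -> exists b, P b /\ R a b) ->
  exists bs, (forall b, In b bs -> P b) /\ (forall a, In a l -> exists b, In b bs /\ R a b).
Proof.
  induction l as [|a l IH]; intros Hl.
  - exists []. split; intros _ [].
  - destruct IH as [bs [H1 H2]]; [intros; apply Hl; simpl; auto|].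
    destruct (Hl a) as [b [Pb Rab]]; [simpl; auto|].
    exists (b :: bs). split.
    + intros b' [<-|Hb']; auto.
    + intros a' [<-|Ha'].
      * exists b. simpl; auto.
      * destruct (H2 a' Ha') as [b' [Hb' R']]. exists b'. simpl; auto.
Qed.

Section GroupFacts.
Context {G : group}.
Implicit Types (x y c : G) (P S : G -> Prop).

Lemma mulgV x : x · x⁻¹ = gone.
Proof.
  rewrite <- (gmul1l _ (x · x⁻¹)), <- (gmulVl _ x⁻¹) at 1.
  rewrite <- gmulA, (gmulA _ x⁻¹ x x⁻¹), gmulVl, gmul1l. apply gmulVl.
Qed.

Lemma mulg1 x : x · gone = x.
Proof. rewrite <- (gmulVl _ x), gmulA, mulgV, gmul1l. reflexivity. Qed.

Lemma mulKg x y : x⁻¹ · (x · y) = y.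
Proof. rewrite gmulA, gmulVl, gmul1l. reflexivity. Qed.

Lemma mulKVg x y : x · (x⁻¹ · y) = y.
Proof. rewrite gmulA, mulgV, gmul1l. reflexivity. Qed.

Lemma mulgK x y : y · x · x⁻¹ = y.
Proof. rewrite <- gmulA, mulgV, mulg1. reflexivity. Qed.

Lemma mulgKV x y : y · x⁻¹ · x = y.
Proof. rewrite <- gmulA, gmulVl, mulg1. reflexivity. Qed.

Lemma mulgI (a : G) x y : a · x = a · y -> x = y.
Proof. intros E. rewrite <- (mulKg a x), <- (mulKg a y), E. reflexivity. Qed.

Lemma mulIg (a : G) x y : x · a = y · a -> x = y.
Proof. intros E. rewrite <- (mulgK a x), <- (mulgK a y), E. reflexivity. Qed.

Lemma eq_invg_mul x y : x · y = gone -> y = x⁻¹.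
Proof. intros E. apply (mulgI x). rewrite E, mulgV. reflexivity. Qed.

Lemma invgK x : x⁻¹⁻¹ = x.
Proof. symmetry. apply eq_invg_mul, gmulVl. Qed.

Lemma invMg x y : (x · y)⁻¹ = y⁻¹ · x⁻¹.
Proof.
  symmetry. apply eq_invg_mul.
  rewrite gmulA, <- (gmulA _ x y), mulgV, mulg1, mulgV. reflexivity.
Qed.

Lemma invg1 : (gone : G)⁻¹ = gone.
Proof. symmetry. apply eq_invg_mul, gmul1l. Qed.

Lemma group1 P : is_subgroup G P -> P gone.
Proof. intros [H _]; exact H. Qed.

Lemma groupM P : is_subgroup G P -> forall x y, P x -> P y -> P (x · y).
Proof. intros [_ [H _]]; exact H. Qed.

Lemma groupV P : is_subgroup G P -> forall x, P x -> P x⁻¹.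
Proof. intros [_ [_ H]]; exact H. Qed.

Lemma groupMV P : is_subgroup G P -> forall x y, P x -> P y -> P (x · y⁻¹).
Proof. intros HP x y Hx Hy. apply groupM, groupV; auto. Qed.

Lemma is_subgroup_ext P P' :
  (forall x, P x <-> P' x) -> is_subgroup G P -> is_subgroup G P'.
Proof.
  intros E [H1 [H2 H3]]. split; [|split].
  - apply E; auto.
  - intros x y Hx Hy. apply E, H2; apply E; auto.
  - intros x Hx. apply E, H3, E; auto.
Qed.

Lemma fin_gen_subgroup_ext P P' :
  (forall x, P x <-> P' x) -> fin_gen_subgroup G P -> fin_gen_subgroup G P'.
Proof.
  intros E [l [H1 H2]]. exists l. split.
  - intros s Hs. apply E; auto.
  - intros x. rewrite <- E. apply H2.
Qed.

Lemma gen_subgroup S : is_subgroup G <<S>>.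
Proof.
  split; [|split].
  - intros P HP _. apply group1; auto.
  - intros x y Hx Hy P HP HS. apply groupM; [|apply Hx|apply Hy]; auto.
  - intros x Hx P HP HS. apply groupV; [|apply Hx]; auto.
Qed.

Lemma mem_gen S x : S x -> <<S>> x.
Proof. intros Hx P _ HS. auto. Qed.

Lemma gen_min S P :
  is_subgroup G P -> (forall s, S s -> P s) -> forall x, <<S>> x -> P x.
Proof. intros HP HS x Hx. apply Hx; auto. Qed.

Lemma gen_trans S S' : (forall s, S s -> <<S'>> s) -> forall x, <<S>> x -> <<S'>> x.
Proof. intros H. apply gen_min; auto. apply gen_subgroup. Qed.

Lemma genS S S' : (forall s, S s -> S' s) -> forall x, <<S>> x -> <<S'>> x.
Proof. intros H. apply gen_trans. intros s Hs. apply mem_gen; auto. Qed.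

Lemma is_subgroup_gen_eq P S : (forall x, P x <-> <<S>> x) -> is_subgroup G P.
Proof.
  intros E. apply (is_subgroup_ext <<S>>); [|apply gen_subgroup].
  intros x. symmetry. apply E.
Qed.

Lemma fin_gen_subgroup_subgroup P : fin_gen_subgroup G P -> is_subgroup G P.
Proof. intros [l [_ H]]. apply (is_subgroup_gen_eq _ _ H). Qed.

Definition conjg c x := c · x · c⁻¹.

Lemma conjgM c x y : conjg c (x · y) = conjg c x · conjg c y.
Proof. unfold conjg. rewrite !gmulA, mulgKV. reflexivity. Qed.

Lemma conjgV c x : conjg c x⁻¹ = (conjg c x)⁻¹.
Proof. unfold conjg. rewrite !invMg, invgK, gmulA. reflexivity. Qed.

Lemma conjg1 c : conjg c gone = gone.
Proof. unfold conjg. rewrite mulg1, mulgV. reflexivity. Qed.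

Lemma conjg_inj c x y : conjg c x = conjg c y -> x = y.
Proof. unfold conjg. intros E. apply mulIg, mulgI in E. exact E. Qed.

Lemma conjgJ c d x : conjg c (conjg d x) = conjg (c · d) x.
Proof. unfold conjg. rewrite invMg, !gmulA. reflexivity. Qed.

Lemma conj1g x : conjg gone x = x.
Proof. unfold conjg. rewrite invg1, mulg1, gmul1l. reflexivity. Qed.

Lemma gen_conjg S c x :
  <<S>> x -> <<fun y => exists z, S z /\ y = conjg c z>> (conjg c x).
Proof.
  revert x. apply gen_min.
  - split; [|split].
    + rewrite conjg1. apply group1, gen_subgroup.
    + intros x y Hx Hy. rewrite conjgM. apply groupM; auto. apply gen_subgroup.
    + intros x Hx. rewrite conjgV. apply groupV; auto. apply gen_subgroup.
  - intros s Hs. apply mem_gen. eauto.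
Qed.

Definition prodg (w : list G) : G := fold_right gmul gone w.

Lemma prodg_app w1 w2 : prodg (w1 ++ w2) = prodg w1 · prodg w2.
Proof.
  induction w1; simpl.
  - rewrite gmul1l. reflexivity.
  - rewrite IHw1, gmulA. reflexivity.
Qed.

Lemma prodg_rev_inv w : prodg (rev (map ginv w)) = (prodg w)⁻¹.
Proof.
  induction w; simpl.
  - rewrite invg1. reflexivity.
  - rewrite prodg_app, IHw. simpl. rewrite mulg1, invMg. reflexivity.
Qed.

Lemma gen_prodg (l : list G) x : <<fun s => In s l>> x ->
  exists w, (forall s, In s w -> In s (l ++ map ginv l)) /\ x = prodg w.
Proof.
  assert (Hl : forall s, In s l -> In s⁻¹ (l ++ map ginv l)).
  { intros s Hs. apply in_or_app. right. apply in_map. exact Hs. }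
  revert x. apply gen_min.
  - split; [|split].
    + exists []. simpl. split; [tauto|auto].
    + intros x y [w1 [H1 ->]] [w2 [H2 ->]]. exists (w1 ++ w2). split.
      * intros s Hs. apply in_app_or in Hs. destruct Hs; auto.
      * rewrite prodg_app. reflexivity.
    + intros x [w [H1 ->]]. exists (rev (map ginv w)). split.
      * intros s Hs. apply in_rev, in_map_iff in Hs. destruct Hs as [s' [<- Hs']].
        apply H1, in_app_or in Hs'. destruct Hs' as [Hs'|Hs']; auto.
        apply in_map_iff in Hs'. destruct Hs' as [s [<- Hs]].
        rewrite invgK. apply in_or_app. auto.
      * rewrite prodg_rev_inv. reflexivity.
  - intros s Hs. exists [s]. simpl. split.
    + intros s' [<-|[]]. apply in_or_app. auto.
    + rewrite mulg1. reflexivity.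
Qed.

Lemma fold_left_mulg {X : Type} (f : X -> G) (l : list X) x0 :
  fold_left (fun acc (c : X) => acc · f c) l x0 = x0 · prodg (map f l).
Proof.
  revert x0. induction l as [|c l IH]; intros x0; simpl.
  - rewrite mulg1. reflexivity.
  - rewrite IH, gmulA. reflexivity.
Qed.

Fixpoint gpow g n : G := match n with O => gone | S n => g · gpow g n end.

Lemma gpowD g a b : gpow g (a + b) = gpow g a · gpow g b.
Proof.
  induction a; simpl.
  - rewrite gmul1l. reflexivity.
  - rewrite IHa, gmulA. reflexivity.
Qed.

Lemma gpowSr g n : gpow g (S n) = gpow g n · g.
Proof. replace (S n) with (n + 1) by lia. rewrite gpowD. simpl. rewrite mulg1. reflexivity. Qed.

Lemma gpowC g a b : gpow g a · gpow g b = gpow g b · gpow g a.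
Proof. rewrite <- !gpowD, Nat.add_comm. reflexivity. Qed.

Lemma gpowV g n : gpow g⁻¹ n = (gpow g n)⁻¹.
Proof.
  induction n; simpl.
  - rewrite invg1. reflexivity.
  - rewrite IHn, <- invMg, <- gpowSr. reflexivity.
Qed.

Lemma group_gpow P : is_subgroup G P -> forall g n, P g -> P (gpow g n).
Proof.
  intros HP g n Hg. induction n; simpl.
  - apply group1; auto.
  - apply groupM; auto.
Qed.

Definition zpow g (z : Z) : G :=
  match z with
  | Z0 => gone
  | Zpos p => gpow g (Pos.to_nat p)
  | Zneg p => (gpow g (Pos.to_nat p))⁻¹
  end.

Lemma zpow_nat g n : zpow g (Z.of_nat n) = gpow g n.
Proof. destruct n; simpl; auto. rewrite SuccNat2Pos.id_succ. reflexivity. Qed.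

Lemma zpowN g z : zpow g (- z) = (zpow g z)⁻¹.
Proof. destruct z; simpl; rewrite ?invg1, ?invgK; reflexivity. Qed.

Lemma zpowN_nat g n : zpow g (- Z.of_nat n) = gpow g⁻¹ n.
Proof. rewrite zpowN, zpow_nat, gpowV. reflexivity. Qed.

Lemma zpow1 g : zpow g 1 = g.
Proof. simpl. apply mulg1. Qed.

Lemma zpow_sub_nat g a b : zpow g (Z.of_nat a - Z.of_nat b) = gpow g a · (gpow g b)⁻¹.
Proof.
  destruct (le_lt_dec b a) as [H|H].
  - replace (Z.of_nat a - Z.of_nat b)%Z with (Z.of_nat (a - b)) by lia.
    replace a with (b + (a - b)) at 2 by lia.
    rewrite zpow_nat, gpowD, gpowC, mulgK. reflexivity.
  - replace (Z.of_nat a - Z.of_nat b)%Z with (- Z.of_nat (b - a))%Z by lia.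
    replace b with ((b - a) + a) at 2 by lia.
    rewrite zpowN, zpow_nat, gpowD, invMg, gmulA, mulgV, gmul1l. reflexivity.
Qed.

Lemma zpowD g a b : zpow g (a + b) = zpow g a · zpow g b.
Proof.
  replace a with (Z.of_nat (Z.to_nat a) - Z.of_nat (Z.to_nat (- a)))%Z by lia.
  replace b with (Z.of_nat (Z.to_nat b) - Z.of_nat (Z.to_nat (- b)))%Z by lia.
  set (a1 := Z.to_nat a). set (a2 := Z.to_nat (- a)).
  set (b1 := Z.to_nat b). set (b2 := Z.to_nat (- b)).
  replace (Z.of_nat a1 - Z.of_nat a2 + (Z.of_nat b1 - Z.of_nat b2))%Z
    with (Z.of_nat (a1 + b1) - Z.of_nat (a2 + b2))%Z by lia.
  rewrite !zpow_sub_nat, !gpowD, (gpowC g a2 b2), invMg, !gmulA.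
  f_equal. rewrite <- !gmulA. f_equal.
  apply (mulgI (gpow g a2)). rewrite mulKVg, gmulA, gpowC, mulgK. reflexivity.
Qed.

Lemma group_zpow P : is_subgroup G P -> forall g z, P g -> P (zpow g z).
Proof.
  intros HP g z Hg. destruct z; simpl.
  - apply group1; auto.
  - apply group_gpow; auto.
  - apply groupV, group_gpow; auto.
Qed.

Lemma group_zpow_mul P g (n : Z) :
  is_subgroup G P -> P (zpow g n) -> forall q, P (zpow g (n * q)).
Proof.
  intros HP Hn.
  assert (Hnat : forall k : nat, P (zpow g (n * Z.of_nat k))).
  { induction k as [|k IHk].
    - rewrite Nat2Z.inj_0, Z.mul_0_r. exact (group1 _ HP).
    - replace (n * Z.of_nat (S k))%Z with (n * Z.of_nat k + n)%Z by lia.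
      rewrite zpowD. apply groupM; auto. }
  intros q. destruct (Z_le_gt_dec 0 q).
  - replace q with (Z.of_nat (Z.to_nat q)) by lia. auto.
  - replace (n * q)%Z with (- (n * Z.of_nat (Z.to_nat (- q))))%Z by lia.
    rewrite zpowN. apply groupV; auto.
Qed.

Lemma is_subgroup_mul_zpow K s : is_subgroup G K ->
  (forall k x, K x -> K (conjg (zpow s k) x)) ->
  is_subgroup G (fun x => exists c m, K c /\ x = c · zpow s m).
Proof.
  intros HK HKs. split; [|split].
  - exists gone, 0%Z. split; [apply group1; auto|]. simpl. rewrite mulg1. reflexivity.
  - intros x y [c [m [Hc ->]]] [c' [m' [Hc' ->]]].
    exists (c · conjg (zpow s m) c'), (m + m')%Z. split.
    + apply groupM; auto.
    + rewrite zpowD. unfold conjg. rewrite !gmulA, mulgKV. reflexivity.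
  - intros x [c [m [Hc ->]]]. exists (conjg (zpow s (- m)) c⁻¹), (- m)%Z. split.
    + apply HKs, groupV; auto.
    + unfold conjg. rewrite mulgKV, invMg, zpowN. reflexivity.
Qed.

End GroupFacts.

(** * Schreier's lemma *)

(* The first element of [l] in the right coset [B x]: choosing it this way
   makes [coset_rep B x l] depend only on the coset. *)
Fixpoint coset_rep {G : group} (B : G -> Prop) (x : G) (l : list G) : G :=
  match l with
  | [] => gone
  | t :: l' => if excluded_middle_informative (B (x · t⁻¹)) then t else coset_rep B x l'
  end.

Lemma coset_rep_spec {G : group} (B : G -> Prop) x l : (exists t, In t l /\ B (x · t⁻¹)) ->
  In (coset_rep B x l) l /\ B (x · (coset_rep B x l)⁻¹).
Proof.
  induction l as [|t l IH]; simpl.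
  - intros [t [[] _]].
  - intros [t' [Ht' Hb]]. destruct (excluded_middle_informative (B (x · t⁻¹))); auto.
    destruct Ht' as [<-|Ht']; [contradiction|]. destruct IH; eauto.
Qed.

Lemma coset_rep_eq {G : group} (B : G -> Prop) x y l : is_subgroup G B ->
  B (x · y⁻¹) -> coset_rep B x l = coset_rep B y l.
Proof.
  intros B_subgroup Hxy.
  assert (E : forall t, B (x · t⁻¹) <-> B (y · t⁻¹)).
  { intros t. split; intros H.
    - replace (y · t⁻¹) with ((x · y⁻¹)⁻¹ · (x · t⁻¹)).
      + apply (groupM _ B_subgroup); auto. apply (groupV _ B_subgroup); auto.
      + rewrite invMg, invgK, <- gmulA, mulKg. reflexivity.
    - replace (x · t⁻¹) with ((x · y⁻¹) · (y · t⁻¹)).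
      + apply (groupM _ B_subgroup); auto.
      + rewrite <- gmulA, mulKg. reflexivity. }
  induction l as [|t l IH]; simpl; auto.
  destruct (excluded_middle_informative (B (x · t⁻¹))) as [h1|h1];
  destruct (excluded_middle_informative (B (y · t⁻¹))) as [h2|h2]; auto;
  exfalso; [apply h2, E | apply h1, E]; assumption.
Qed.

Section Schreier.
Context {G : group}.
Variables (A B : G -> Prop) (lA T : list G).
Hypothesis A_gen : forall x, A x <-> <<fun s => In s lA>> x.
Hypothesis B_subgroup : is_subgroup G B.
Hypothesis B_sub_A : forall x, B x -> A x.
Hypothesis T_sub_A : forall t, In t T -> A t.
Hypothesis T_covers : forall a, A a -> exists t, In t T /\ B (a · t⁻¹).

Let A_subgroup : is_subgroup G A.
Proof. apply (is_subgroup_gen_eq _ _ A_gen). Qed.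

Let T1 := gone :: T.

Let rep x := coset_rep B x T1.

Let rep_spec x : A x -> In (rep x) T1 /\ B (x · (rep x)⁻¹).
Proof.
  intros Hx. apply coset_rep_spec.
  destruct (T_covers x Hx) as [t [Ht Hb]]. exists t. split; simpl; auto.
Qed.

Let rep_eq x y : B (x · y⁻¹) -> rep x = rep y.
Proof. apply coset_rep_eq; auto. Qed.

Let rep1 : rep gone = gone.
Proof.
  unfold rep, T1. simpl.
  destruct (excluded_middle_informative (B (gone · gone⁻¹))) as [_|h]; auto.
  exfalso. apply h. rewrite mulgV. apply group1; auto.
Qed.

Let T1_sub_A t : In t T1 -> A t.
Proof. intros [<-|Ht]; [apply group1|]; auto. Qed.

Let Sym := lA ++ map ginv lA.

Let Sym_sub_A s : In s Sym -> A s.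
Proof.
  assert (HlA : forall s, In s lA -> A s) by (intros; apply A_gen, mem_gen; auto).
  intros Hs. apply in_app_or in Hs. destruct Hs as [Hs|Hs]; auto.
  apply in_map_iff in Hs. destruct Hs as [s' [<- Hs']]. apply groupV; auto.
Qed.

Definition schreier_gens : list G :=
  map (fun t => t · (rep t)⁻¹) T1 ++
  flat_map (fun t => map (fun s => t · s · (rep (t · s))⁻¹) Sym) T1.

Lemma schreier_gens_in y : In y schreier_gens -> B y.
Proof.
  intros Hy. apply in_app_or in Hy. destruct Hy as [Hy|Hy].
  - apply in_map_iff in Hy. destruct Hy as [t [<- Ht]]. apply rep_spec; auto.
  - apply in_flat_map in Hy. destruct Hy as [t [Ht Hy]]. apply in_map_iff in Hy.
    destruct Hy as [s [<- Hs]]. apply rep_spec, groupM; auto.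
Qed.

(* Peel off one letter: [t · s · w = (t · s · t'⁻¹) · (t' · w)] with [t' := rep (t · s)]. *)
Lemma gen_schreier_gens w t : (forall s, In s w -> In s Sym) -> In t T1 ->
  <<fun y => In y schreier_gens>> (t · prodg w · (rep (t · prodg w))⁻¹).
Proof.
  revert t. induction w as [|s w IH]; intros t Hw Ht; simpl prodg.
  - apply mem_gen. rewrite mulg1. apply in_or_app. left.
    apply (in_map (fun t => t · (rep t)⁻¹)). auto.
  - assert (Hs : In s Sym) by (apply Hw; simpl; auto).
    set (t' := rep (t · s)).
    assert (Ht' : In t' T1 /\ B (t · s · t'⁻¹)) by (apply rep_spec, groupM; auto).
    assert (E : rep (t · (s · prodg w)) = rep (t' · prodg w)).
    { apply rep_eq. rewrite invMg, !gmulA, mulgK. apply Ht'. }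
    replace (t · (s · prodg w) · (rep (t · (s · prodg w)))⁻¹)
      with ((t · s · t'⁻¹) · (t' · prodg w · (rep (t' · prodg w))⁻¹)).
    + apply groupM; [apply gen_subgroup| |].
      * apply mem_gen, in_or_app. right. apply in_flat_map. exists t. split; auto.
        apply (in_map (fun s => t · s · (rep (t · s))⁻¹)). auto.
      * apply IH; [intros; apply Hw; simpl|apply Ht']; auto.
    + rewrite E, !gmulA, mulgKV. reflexivity.
Qed.

Lemma schreier_fin_gen : fin_gen_subgroup G B.
Proof.
  exists schreier_gens. split; [apply schreier_gens_in|]. intros x. split.
  - intros Hx. destruct (gen_prodg lA x) as [w [Hw ->]]; [apply A_gen; auto|].
    pose proof (gen_schreier_gens w gone Hw (or_introl eq_refl)) as K.
    rewrite gmul1l, (rep_eq (prodg w) gone), rep1, invg1, mulg1 in K; auto.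
    rewrite invg1, mulg1. auto.
  - apply gen_min; auto. apply schreier_gens_in.
Qed.

End Schreier.

(** * Conjugates forced by the absence of free subsemigroups *)

Section ConjugateRelation.
Context {G : group}.
Variables (D : G -> Prop) (b t : G).
Hypothesis D_subgroup : is_subgroup G D.
Hypothesis Db : D b.
Hypothesis D_conj : forall x, D x -> D (conjg t x).
Hypothesis D_no_pow : forall n, 0 < n -> ~ D (gpow t n).

Let letter (c : bool) : G := if c then b · t else t.

(* Moving every [t] to the right, a word in the letters [b · t] and [t]
   becomes [word_dpart w · t ^ length w] with [word_dpart w] in [D]. *)
Fixpoint word_dpart (w : list bool) : G :=
  match w with
  | [] => gone
  | true :: w => b · conjg t (word_dpart w)
  | false :: w => conjg t (word_dpart w)
  end.

Definition conjugates_upto (p : nat) (y : G) : Prop :=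
  exists i, 1 <= i <= p /\ y = conjg (gpow t i) b.

Lemma prodg_letters w : prodg (map letter w) = word_dpart w · gpow t (length w).
Proof.
  induction w as [|c w IH]; simpl.
  - rewrite mulg1. reflexivity.
  - rewrite IH. unfold letter, conjg. destruct c; rewrite !gmulA, mulgKV; reflexivity.
Qed.

Lemma word_dpart_in w : D (word_dpart w).
Proof.
  induction w as [|[|] w IH]; simpl.
  - apply group1; auto.
  - apply groupM; auto.
  - auto.
Qed.

Lemma gen_conjg_word_dpart w : <<conjugates_upto (length w)>> (conjg t (word_dpart w)).
Proof.
  induction w as [|c w IH]; simpl.
  - rewrite conjg1. apply group1, gen_subgroup.
  - assert (Hw : <<conjugates_upto (S (length w))>> (conjg t (conjg t (word_dpart w)))).
    { apply (genS (fun y => exists z, conjugates_upto (length w) z /\ y = conjg t z)).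
      - intros y [z [[i [Hi ->]] ->]]. exists (S i). split; [lia|].
        rewrite conjgJ. reflexivity.
      - apply gen_conjg, IH. }
    destruct c; auto. rewrite conjgM.
    apply groupM; [apply gen_subgroup| |exact Hw].
    apply mem_gen. exists 1. split; [lia|]. simpl. rewrite mulg1. reflexivity.
Qed.

Lemma word_dpart_eq u v : length u = length v -> u <> v ->
  word_dpart u = word_dpart v -> exists p, <<conjugates_upto p>> b.
Proof.
  revert v. induction u as [|c1 u IH]; intros [|c2 v] Hl Huv E; simpl in Hl;
    try discriminate; [contradiction|].
  injection Hl as Hl.
  (* at the first letter where [u] and [v] differ, [b] is a quotient of two
     conjugated [D]-parts *)
  destruct c1, c2; simpl in E.
  - apply mulgI, conjg_inj in E. apply (IH v); auto. intros ->. auto.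
  - exists (length u).
    replace b with (conjg t (word_dpart v) · (conjg t (word_dpart u))⁻¹)
      by (rewrite <- E, mulgK; reflexivity).
    apply groupMV; [apply gen_subgroup|rewrite Hl|]; apply gen_conjg_word_dpart.
  - exists (length u).
    replace b with (conjg t (word_dpart u) · (conjg t (word_dpart v))⁻¹)
      by (rewrite E, mulgK; reflexivity).
    apply groupMV; [apply gen_subgroup| |rewrite Hl]; apply gen_conjg_word_dpart.
  - apply conjg_inj in E. apply (IH v); auto. intros ->. auto.
Qed.

Lemma gpow_eq_of_mod x y m n : D x -> D y -> x · gpow t m = y · gpow t n -> m = n.
Proof.
  assert (Hlt : forall x y m n, D x -> D y -> x · gpow t m = y · gpow t n -> ~ m < n).
  { intros x' y' m' n' Hx Hy E Hmn. apply (D_no_pow (n' - m')); [lia|].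
    replace n' with ((n' - m') + m') in E by lia. rewrite gpowD, gmulA in E.
    apply mulIg in E. replace (gpow t (n' - m')) with (y'⁻¹ · x')
      by (rewrite E, mulKg; reflexivity).
    apply groupM, Hx; auto. apply groupV; auto. }
  intros Hx Hy E.
  destruct (lt_eq_lt_dec m n) as [[H|H]|H]; auto; exfalso; [eapply (Hlt x y) | eapply (Hlt y x)]; eauto.
Qed.

Lemma gen_conjugates_no_free : ~ has_free_subsemigroup2 G ->
  exists p, <<conjugates_upto p>> b.
Proof.
  intros NF.
  assert (NI : ~ injective (word_val G (b · t) t)) by (intros Hi; apply NF; exists (b · t), t; exact Hi).
  apply not_all_ex_not in NI. destruct NI as [[x1 l1] NI].
  apply not_all_ex_not in NI. destruct NI as [[x2 l2] NI].
  apply imply_to_and in NI. destruct NI as [E Hne].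
  unfold word_val in E. simpl in E. rewrite !fold_left_mulg in E.
  change (prodg (map letter (x1 :: l1)) = prodg (map letter (x2 :: l2))) in E.
  rewrite !prodg_letters in E.
  pose proof (gpow_eq_of_mod _ _ _ _ (word_dpart_in _) (word_dpart_in _) E) as Hl.
  rewrite Hl in E. apply mulIg in E.
  apply (word_dpart_eq (x1 :: l1) (x2 :: l2)); auto.
  intros Heq. injection Heq as -> ->. auto.
Qed.

End ConjugateRelation.

Section TwoSidedConjugates.
Context {G : group}.
Variables (D : G -> Prop) (s : G).
Hypothesis NF : ~ has_free_subsemigroup2 G.
Hypothesis D_subgroup : is_subgroup G D.
Hypothesis D_no_zpow : forall m, m <> 0%Z -> ~ D (zpow s m).
Hypothesis D_conj : forall x, D x -> D (conjg s x).
Hypothesis D_conjV : forall x, D x -> D (conjg s⁻¹ x).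

Definition zconj (k : Z) (x : G) : G := conjg (zpow s k) x.

Lemma conjg_zconj k i x : conjg (zpow s k) (zconj i x) = zconj (k + i) x.
Proof. unfold zconj. rewrite conjgJ, zpowD. reflexivity. Qed.

Lemma zconj0 x : zconj 0 x = x.
Proof. apply conj1g. Qed.

Lemma gen_zconj_sides b : D b -> exists p q,
  <<fun y => exists i, 1 <= i <= p /\ y = zconj (Z.of_nat i) b>> b /\
  <<fun y => exists i, 1 <= i <= q /\ y = zconj (- Z.of_nat i) b>> b.
Proof.
  intros Hb.
  destruct (gen_conjugates_no_free D b s) as [p Hp]; auto.
  { intros n Hn HDn. apply (D_no_zpow (Z.of_nat n)); [lia|]. rewrite zpow_nat. auto. }
  destruct (gen_conjugates_no_free D b s⁻¹) as [q Hq]; auto.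
  { intros n Hn HDn. apply (D_no_zpow (- Z.of_nat n)); [lia|]. rewrite zpowN_nat. auto. }
  exists p, q. split.
  - revert Hp. apply genS. intros y [i [Hi ->]]. exists i. split; auto.
    unfold zconj. rewrite zpow_nat. reflexivity.
  - revert Hq. apply genS. intros y [i [Hi ->]]. exists i. split; auto.
    unfold zconj. rewrite zpowN_nat. reflexivity.
Qed.

(* Conjugating the two relations of [gen_zconj_sides] by [s ^ k] expresses each
   conjugate of [b] through the [p] conjugates above it, or the [q] below it;
   so a window of [max p q] consecutive conjugates generates all of them. *)
Lemma gen_zconj_window b : D b -> exists n, forall k,
  <<fun y => exists i, i < n /\ y = zconj (Z.of_nat i) b>> (zconj k b).
Proof.
  intros Hb. destruct (gen_zconj_sides b Hb) as [p [q [Ep Eq]]].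
  exists (Nat.max p q).
  set (W := fun y => exists i, i < Nat.max p q /\ y = zconj (Z.of_nat i) b).
  assert (Up : forall k, <<fun y => exists i, 1 <= i <= p /\ y = zconj (k + Z.of_nat i) b>>
                           (zconj k b)).
  { intros k. apply gen_conjg with (c := zpow s k) in Ep. revert Ep. apply genS.
    intros y [z [[i [Hi ->]] ->]]. exists i. split; auto. apply conjg_zconj. }
  assert (Down : forall k, <<fun y => exists i, 1 <= i <= q /\ y = zconj (k - Z.of_nat i) b>>
                             (zconj k b)).
  { intros k. apply gen_conjg with (c := zpow s k) in Eq. revert Eq. apply genS.
    intros y [z [[i [Hi ->]] ->]]. exists i. split; auto. apply conjg_zconj. }
  assert (Grow : forall r k, (- Z.of_nat r <= k < Z.of_nat (Nat.max p q) + Z.of_nat r)%Z ->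
                             <<W>> (zconj k b)).
  { induction r as [|r IH]; intros k Hk.
    - apply mem_gen. exists (Z.to_nat k). split; [lia|]. f_equal. lia.
    - destruct (Z.eq_dec k (- Z.of_nat (S r))) as [Ek|Ek].
      + generalize (Up k). apply gen_trans. intros y [i [Hi ->]]. apply IH. lia.
      + destruct (Z.eq_dec k (Z.of_nat (Nat.max p q) + Z.of_nat r)) as [Ek'|Ek'].
        * generalize (Down k). apply gen_trans. intros y [i [Hi ->]]. apply IH. lia.
        * apply IH. lia. }
  intros k. apply (Grow (S (Z.to_nat (Z.abs k)))). lia.
Qed.

Lemma gen_zconj_list (bs : list G) : (forall b, In b bs -> D b) ->
  exists l, (forall y, In y l -> exists b k, In b bs /\ y = zconj k b) /\
            (forall b k, In b bs -> <<fun y => In y l>> (zconj k b)).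
Proof.
  induction bs as [|b bs IH]; intros Hbs.
  - exists []. split; [intros y []|intros b k []].
  - destruct IH as [l [H1 H2]]; [intros; apply Hbs; simpl; auto|].
    destruct (gen_zconj_window b) as [n Hn]; [apply Hbs; simpl; auto|].
    exists (map (fun i => zconj (Z.of_nat i) b) (seq 0 n) ++ l). split.
    + intros y Hy. apply in_app_or in Hy. destruct Hy as [Hy|Hy].
      * apply in_map_iff in Hy. destruct Hy as [i [<- _]]. exists b, (Z.of_nat i). simpl; auto.
      * destruct (H1 y Hy) as [b' [k [Hb' ->]]]. exists b', k. simpl; auto.
    + intros b' k [<-|Hb'].
      * generalize (Hn k). apply genS. intros y [i [Hi ->]].
        apply in_or_app. left. apply (in_map (fun i => zconj (Z.of_nat i) b)), in_seq. lia.
      * generalize (H2 b' k Hb'). apply genS. intros y Hy. apply in_or_app. auto.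
Qed.

End TwoSidedConjugates.

(** * Cyclic extensions *)

Section CyclicExtension.
Context {G : group}.
Variables (C D : G -> Prop) (lC : list G) (s : G).
Hypothesis NF : ~ has_free_subsemigroup2 G.
Hypothesis C_gen : forall x, C x <-> <<fun y => In y lC>> x.
Hypothesis D_subgroup : is_subgroup G D.
Hypothesis D_sub_C : forall x, D x -> C x.
Hypothesis D_normal : forall c x, C c -> D x -> D (conjg c x).
Hypothesis Cs : C s.
Hypothesis C_decomp : forall c, C c -> exists y m, D y /\ c = y · zpow s m.

Let C_subgroup : is_subgroup G C.
Proof. apply (is_subgroup_gen_eq _ _ C_gen). Qed.

Let D_conj_zpow k x : D x -> D (conjg (zpow s k) x).
Proof. apply D_normal, group_zpow; auto. Qed.

Lemma fin_gen_finite_cyclic n : (0 < n)%nat -> D (zpow s (Z.of_nat n)) ->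
  fin_gen_subgroup G D.
Proof.
  intros Hn HDn.
  apply (schreier_fin_gen C D lC (map (fun i => zpow s (Z.of_nat i)) (seq 0 n))); auto.
  - intros t Ht. apply in_map_iff in Ht. destruct Ht as [i [<- _]]. apply group_zpow; auto.
  - intros c Hc. destruct (C_decomp c Hc) as [y [k [Hy ->]]].
    exists (zpow s (k mod Z.of_nat n)). split.
    + replace (k mod Z.of_nat n)%Z with (Z.of_nat (Z.to_nat (k mod Z.of_nat n)))
        by (pose proof (Z.mod_pos_bound k (Z.of_nat n)); lia).
      apply (in_map (fun i => zpow s (Z.of_nat i))), in_seq.
      pose proof (Z.mod_pos_bound k (Z.of_nat n)). lia.
    + rewrite (Z_div_mod_eq_full k (Z.of_nat n)) at 1.
      rewrite zpowD, gmulA, mulgK. apply groupM; auto. apply group_zpow_mul; auto.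
Qed.

(* Every generator of [C] is [b · s ^ m] with [b] in [D]; the conjugates of
   these finitely many [b] under [<s>] are finitely generated, and they
   generate [D] because [D] meets [<s>] trivially. *)
Lemma fin_gen_infinite_cyclic : (forall m, m <> 0%Z -> ~ D (zpow s m)) ->
  fin_gen_subgroup G D.
Proof.
  intros D_no_zpow.
  destruct (list_choice D (fun a b => exists m, a = b · zpow s m) lC) as [bs [Hbs Hdec]].
  { intros a Ha. destruct (C_decomp a) as [y [m [Hy ->]]]; [apply C_gen, mem_gen; auto|].
    eauto. }
  destruct (gen_zconj_list D s NF D_subgroup D_no_zpow) with (bs := bs)
    as [l [Hl_in Hl_gen]]; auto.
  { intros x Hx. apply D_normal; auto. apply groupV; auto. }
  set (C' := <<fun y => In y l>>).
  assert (C'_sub_D : forall x, C' x -> D x).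
  { apply gen_min; auto. intros y Hy. destruct (Hl_in y Hy) as [b [k [Hb ->]]].
    apply D_conj_zpow; auto. }
  assert (C'_conj : forall k x, C' x -> C' (conjg (zpow s k) x)).
  { intros k x Hx. apply gen_conjg with (c := zpow s k) in Hx. revert Hx. apply gen_trans.
    intros y [z [Hz ->]]. destruct (Hl_in z Hz) as [b [k' [Hb ->]]].
    rewrite conjg_zconj. apply Hl_gen; auto. }
  assert (C_sub_C's : forall x, C x -> exists c m, C' c /\ x = c · zpow s m).
  { intros x Hx. apply C_gen in Hx. revert x Hx. apply gen_min.
    - apply is_subgroup_mul_zpow; [apply gen_subgroup | exact C'_conj].
    - intros a Ha. destruct (Hdec a Ha) as [b [Hb [m ->]]]. exists b, m. split; auto.
      rewrite <- (zconj0 s b). apply Hl_gen; auto. }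
  exists l. split; [intros; apply C'_sub_D, mem_gen; auto|]. intros x. split.
  - intros Hx. destruct (C_sub_C's x (D_sub_C x Hx)) as [c [m [Hc ->]]].
    destruct (Z.eq_dec m 0) as [->|Hm].
    + simpl. rewrite mulg1. auto.
    + exfalso. apply (D_no_zpow m Hm).
      replace (zpow s m) with (c⁻¹ · (c · zpow s m)) by apply mulKg.
      apply groupM; auto. apply groupV; auto.
  - apply C'_sub_D.
Qed.

Lemma fin_gen_cyclic_extension : fin_gen_subgroup G D.
Proof.
  destruct (classic (exists m, m <> 0%Z /\ D (zpow s m))) as [[m [Hm HDm]]|Hno].
  - apply (fin_gen_finite_cyclic (Z.to_nat (Z.abs m))); [lia|].
    replace (Z.of_nat (Z.to_nat (Z.abs m))) with (Z.abs m) by lia.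
    destruct (Z.abs_eq_or_opp m) as [-> | ->]; auto.
    rewrite zpowN. apply groupV; auto.
  - apply fin_gen_infinite_cyclic. intros m Hm HDm. apply Hno. eauto.
Qed.

End CyclicExtension.

(** * Subgroups containing the commutators *)

Section AboveCommutators.
Context {G : group}.
Variables (A K : G -> Prop) (lA : list G).
Hypothesis NF : ~ has_free_subsemigroup2 G.
Hypothesis A_gen : forall x, A x <-> <<fun y => In y lA>> x.
Hypothesis K_subgroup : is_subgroup G K.
Hypothesis K_sub_A : forall x, K x -> A x.
Hypothesis K_comm : forall x y, A x -> A y -> K (x⁻¹ · y⁻¹ · x · y).

Let A_subgroup : is_subgroup G A.
Proof. apply (is_subgroup_gen_eq _ _ A_gen). Qed.

Definition K_with (l : list G) : G -> Prop := <<fun x => K x \/ In x l>>.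

Let K_with_sub_A l : (forall s, In s l -> A s) -> forall x, K_with l x -> A x.
Proof. intros Hl. apply gen_min; auto. intros x [Hx|Hx]; auto. Qed.

Lemma normal_above_commutators D : is_subgroup G D ->
  (forall x, K x -> D x) -> (forall x, D x -> A x) ->
  forall c x, A c -> D x -> D (conjg c x).
Proof.
  intros HD KD DA c x Hc Hx.
  replace (conjg c x) with (x · (x⁻¹ · c⁻¹⁻¹ · x · c⁻¹)).
  - apply (groupM _ HD); auto. apply KD, K_comm; auto. apply (groupV _ A_subgroup); auto.
  - unfold conjg. rewrite invgK, !gmulA, mulgV, gmul1l. reflexivity.
Qed.

Lemma K_with_cons s l : A s -> (forall s, In s l -> A s) ->
  forall x, K_with (s :: l) x -> exists c m, K_with l c /\ x = c · zpow s m.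
Proof.
  intros Hs Hl. apply gen_min.
  - apply is_subgroup_mul_zpow; [apply gen_subgroup|]. intros k x Hx.
    apply (normal_above_commutators (K_with l)); auto.
    + apply gen_subgroup.
    + intros y Hy. apply mem_gen. auto.
    + apply K_with_sub_A; auto.
    + apply group_zpow; auto.
  - intros x [Hx|[<-|Hx]].
    + exists x, 0%Z. split; [apply mem_gen; auto|]. simpl. rewrite mulg1. reflexivity.
    + exists gone, 1%Z. split; [apply group1, gen_subgroup|]. rewrite zpow1, gmul1l. reflexivity.
    + exists x, 0%Z. split; [apply mem_gen; auto|]. simpl. rewrite mulg1. reflexivity.
Qed.

(* Adjoining the elements of [l] one at a time; each step is a cyclic extension. *)
Lemma fin_gen_of_K_with l : (forall s, In s l -> A s) ->
  fin_gen_subgroup G (K_with l) -> fin_gen_subgroup G K.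
Proof.
  induction l as [|s l IH]; intros Hl Hfg.
  - revert Hfg. apply fin_gen_subgroup_ext. intros x. split.
    + apply gen_min; auto. intros y [Hy|[]]. auto.
    + intros Hx. apply mem_gen. auto.
  - assert (Hl' : forall s, In s l -> A s) by (intros; apply Hl; simpl; auto).
    apply IH; auto. destruct Hfg as [lC [_ HlC]].
    apply (fin_gen_cyclic_extension (K_with (s :: l)) (K_with l) lC s); auto.
    + apply gen_subgroup.
    + apply genS. intros x [Hx|Hx]; simpl; auto.
    + intros c x Hc Hx. apply (normal_above_commutators (K_with l)); auto.
      * apply gen_subgroup.
      * intros y Hy. apply mem_gen. auto.
      * apply K_with_sub_A; auto.
      * apply (K_with_sub_A (s :: l)); auto.
    + apply mem_gen. simpl. auto.
    + apply K_with_cons; auto. apply Hl. simpl. auto.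
Qed.

Lemma fin_gen_above_commutators : fin_gen_subgroup G K.
Proof.
  assert (HlA : forall s, In s lA -> A s) by (intros; apply A_gen, mem_gen; auto).
  apply (fin_gen_of_K_with lA); auto. exists lA. split.
  - intros x Hx. apply mem_gen. auto.
  - intros x. split.
    + intros Hx. apply A_gen. apply (K_with_sub_A lA); auto.
    + apply genS. auto.
Qed.

End AboveCommutators.

(** * Homomorphisms modulo a normal subgroup *)

Lemma hom_one {G Q : group} (f : G -> Q) : is_hom G Q f -> f gone = gone.
Proof. intros Hf. apply (mulgI (f gone)). rewrite <- Hf, gmul1l, mulg1. reflexivity. Qed.

Lemma hom_inv {G Q : group} (f : G -> Q) : is_hom G Q f -> forall x, f x⁻¹ = (f x)⁻¹.
Proof. intros Hf x. apply eq_invg_mul. rewrite <- Hf, mulgV. apply hom_one; auto. Qed.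

Definition img {G Q : group} (f : G -> Q) (P : G -> Prop) (y : Q) : Prop :=
  exists x, P x /\ f x = y.

Lemma is_subgroup_preim {G Q : group} (f : G -> Q) P :
  is_hom G Q f -> is_subgroup Q P -> is_subgroup G (fun x => P (f x)).
Proof.
  intros Hf HP. split; [|split].
  - rewrite hom_one; auto. apply group1; auto.
  - intros x y Hx Hy. rewrite Hf. apply groupM; auto.
  - intros x Hx. rewrite hom_inv; auto. apply groupV; auto.
Qed.

Lemma is_subgroup_img {G Q : group} (f : G -> Q) P :
  is_hom G Q f -> is_subgroup G P -> is_subgroup Q (img f P).
Proof.
  intros Hf HP. split; [|split].
  - exists gone. split; [apply group1; auto|apply hom_one; auto].
  - intros x y [a [Ha <-]] [b [Hb <-]]. exists (a · b). split; [apply groupM; auto|apply Hf].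
  - intros x [a [Ha <-]]. exists a⁻¹. split; [apply groupV; auto|apply hom_inv; auto].
Qed.

Definition normal_in (Q : group) (H M : Q -> Prop) : Prop :=
  is_subgroup Q H /\ is_subgroup Q M /\ (forall x, M x -> H x) /\
  (forall h m, H h -> M m -> M (h⁻¹ · m · h)).

Lemma normal_in_preim {G Q : group} (f : G -> Q) H M : is_hom G Q f ->
  normal_in Q H M -> normal_in G (fun x => H (f x)) (fun x => M (f x)).
Proof.
  intros Hf [HH [HM [MH Hn]]]. split; [|split; [|split]].
  - apply is_subgroup_preim; auto.
  - apply is_subgroup_preim; auto.
  - auto.
  - intros h m Hh Hm. rewrite !Hf, hom_inv; auto.
Qed.

Lemma normal_in_img {G Q : group} (f : G -> Q) H M : is_hom G Q f ->
  normal_in G H M -> normal_in Q (img f H) (img f M).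
Proof.
  intros Hf [HH [HM [MH Hn]]]. split; [|split; [|split]].
  - apply is_subgroup_img; auto.
  - apply is_subgroup_img; auto.
  - intros x [a [Ha <-]]. exists a. auto.
  - intros h m [a [Ha <-]] [b [Hb <-]]. exists (a⁻¹ · b · a). split; auto.
    rewrite !Hf, hom_inv; auto.
Qed.

Definition congr_mod {Q : group} (M : Q -> Prop) (x y : Q) : Prop := M (x⁻¹ · y).

Lemma congr_mod_1 {Q : group} (M : Q -> Prop) y : congr_mod M gone y <-> M y.
Proof. unfold congr_mod. rewrite invg1, gmul1l. reflexivity. Qed.

Lemma congr_mod_in {Q : group} (M P : Q -> Prop) x y : is_subgroup Q P ->
  (forall m, M m -> P m) -> congr_mod M x y -> P x -> P y.
Proof.
  unfold congr_mod. intros HP MP E Hx. rewrite <- (mulKVg x y). apply groupM; auto.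
Qed.

Section Congruence.
Context {Q : group} {H M : Q -> Prop} (HN : normal_in Q H M).

Let HM : is_subgroup Q M := proj1 (proj2 HN).

Lemma congr_refl x : congr_mod M x x.
Proof. unfold congr_mod. rewrite gmulVl. apply group1; auto. Qed.

Lemma congr_sym x y : congr_mod M x y -> congr_mod M y x.
Proof.
  unfold congr_mod. intros E. replace (y⁻¹ · x) with ((x⁻¹ · y)⁻¹).
  - apply groupV; auto.
  - rewrite invMg, invgK. reflexivity.
Qed.

Lemma congr_trans x y z : congr_mod M x y -> congr_mod M y z -> congr_mod M x z.
Proof.
  unfold congr_mod. intros E1 E2. replace (x⁻¹ · z) with ((x⁻¹ · y) · (y⁻¹ · z)).
  - apply groupM; auto.
  - rewrite <- gmulA, mulKVg. reflexivity.
Qed.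

Lemma congr_M x y : congr_mod M x y -> M x -> M y.
Proof. apply congr_mod_in; auto. Qed.

Lemma congr_M_iff x y : congr_mod M x y -> M x <-> M y.
Proof. intros E. split; apply congr_M; [|apply congr_sym]; auto. Qed.

Lemma congr_H x y : congr_mod M x y -> H x -> H y.
Proof. apply congr_mod_in; apply HN. Qed.

Lemma congr_mul x x' y y' : H y ->
  congr_mod M x x' -> congr_mod M y y' -> congr_mod M (x · y) (x' · y').
Proof.
  unfold congr_mod. intros Hy E1 E2.
  replace ((x · y)⁻¹ · (x' · y')) with ((y⁻¹ · (x⁻¹ · x') · y) · (y⁻¹ · y')).
  - apply groupM; auto. apply HN; auto.
  - rewrite invMg, !gmulA, mulgK. reflexivity.
Qed.

Lemma congr_inv x y : H x -> congr_mod M x y -> congr_mod M x⁻¹ y⁻¹.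
Proof.
  unfold congr_mod. intros Hx E. rewrite invgK.
  replace (x · y⁻¹) with (x⁻¹⁻¹ · (x⁻¹ · y)⁻¹ · x⁻¹).
  - apply HN; [apply (groupV _ (proj1 HN)) | apply groupV]; auto.
  - rewrite invgK, invMg, invgK, !gmulA, mulgK. reflexivity.
Qed.

End Congruence.

Definition hom_modulo {G Q : group} (A : G -> Prop) (M : Q -> Prop) (f : G -> Q) : Prop :=
  forall x y, A x -> A y -> congr_mod M (f (x · y)) (f x · f y).

Section HomModulo.
Context {G Q : group} {H M : Q -> Prop} (HN : normal_in Q H M).
Context {A : G -> Prop} (HA : is_subgroup G A).
Context {f : G -> Q} (f_H : forall x, A x -> H (f x)) (f_hom : hom_modulo A M f).

Lemma hom_modulo_1 : M (f gone).
Proof.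
  pose proof (f_hom gone gone (group1 _ HA) (group1 _ HA)) as E.
  unfold congr_mod in E. rewrite gmul1l, mulKg in E. exact E.
Qed.

Lemma hom_modulo_V x : A x -> congr_mod M (f x⁻¹) (f x)⁻¹.
Proof.
  intros Ax. assert (Ax' : A x⁻¹) by (apply groupV; auto).
  assert (E : congr_mod M gone (f x⁻¹ · f x)).
  { apply (congr_trans HN _ (f (x⁻¹ · x))); [|auto].
    rewrite gmulVl. apply congr_mod_1, hom_modulo_1. }
  apply (congr_sym HN); auto.
  pose proof (congr_mul HN _ _ (f x)⁻¹ (f x)⁻¹ (groupV _ (proj1 HN) _ (f_H x Ax)) E
                (congr_refl HN _)) as E'.
  rewrite gmul1l, mulgK in E'. exact E'.
Qed.

Lemma hom_modulo_MV x y : A x -> A y -> congr_mod M (f (x · y⁻¹)) (f x · (f y)⁻¹).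
Proof.
  intros Ax Ay. apply (congr_trans HN _ (f x · f y⁻¹)).
  - apply f_hom; auto. apply groupV; auto.
  - apply (congr_mul HN); [|apply (congr_refl HN)|apply hom_modulo_V]; auto.
    apply f_H, groupV; auto.
Qed.

Lemma kernel_of_congr a b : A a -> A b -> congr_mod M (f a) (f b) -> M (f (a⁻¹ · b)).
Proof.
  intros Aa Ab E. apply (congr_mod_in M M ((f a)⁻¹ · f b)); auto; [apply HN|].
  apply (congr_sym HN), (congr_trans HN _ (f a⁻¹ · f b)).
  - apply f_hom; auto. apply groupV; auto.
  - apply (congr_mul HN); [|apply hom_modulo_V|apply (congr_refl HN)]; auto.
Qed.

Lemma is_subgroup_congr_img P : is_subgroup Q P ->
  is_subgroup G (fun a => A a /\ exists z, P z /\ congr_mod M (f a) z).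
Proof.
  intros HP. split; [|split].
  - split; [apply group1; auto|]. exists gone. split; [apply group1; auto|].
    apply (congr_sym HN), congr_mod_1, hom_modulo_1.
  - intros x y [Ax [z [Pz Ez]]] [Ay [z' [Pz' Ez']]]. split; [apply groupM; auto|].
    exists (z · z'). split; [apply groupM; auto|].
    apply (congr_trans HN _ (f x · f y)); [apply f_hom; auto|].
    apply (congr_mul HN); auto.
  - intros x [Ax [z [Pz Ez]]]. split; [apply groupV; auto|].
    exists z⁻¹. split; [apply groupV; auto|].
    apply (congr_trans HN _ (f x)⁻¹); [apply hom_modulo_V; auto|].
    apply (congr_inv HN); auto.
Qed.

Lemma is_subgroup_kernel : is_subgroup G (fun x => A x /\ M (f x)).
Proof.
  assert (HM : is_subgroup Q M) by apply HN.
  split; [|split].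
  - split; [apply group1; auto|apply hom_modulo_1].
  - intros x y [Ax Mx] [Ay My]. split; [apply groupM; auto|].
    apply (congr_mod_in M _ (f x · f y)); auto; [|apply groupM; auto].
    apply (congr_sym HN), f_hom; auto.
  - intros x [Ax Mx]. split; [apply groupV; auto|].
    apply (congr_mod_in M _ (f x)⁻¹); auto; [|apply groupV; auto].
    apply (congr_sym HN), hom_modulo_V; auto.
Qed.

End HomModulo.

Lemma hom_modulo_img {G L Q : group} (p : L -> Q) (A : G -> Prop) M (f : G -> L) :
  is_hom L Q p -> hom_modulo A M f -> hom_modulo A (img p M) (fun x => p (f x)).
Proof.
  intros Hp Hf x y Ax Ay. exists ((f (x · y))⁻¹ · (f x · f y)). split; [apply Hf; auto|].
  unfold congr_mod. rewrite !Hp, hom_inv; auto.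
Qed.

Lemma hom_modulo_preim {G L Q : group} (i : L -> Q) (A : G -> Prop) M (g : G -> L) :
  is_hom L Q i -> hom_modulo A M (fun x => i (g x)) -> hom_modulo A (fun y => M (i y)) g.
Proof.
  intros Hi Hg x y Ax Ay. unfold congr_mod. rewrite Hi, hom_inv, Hi; auto. apply Hg; auto.
Qed.

Lemma hom_modulo_congr {G Q : group} {H M : Q -> Prop} (HN : normal_in Q H M)
    (A : G -> Prop) (f g : G -> Q) :
  is_subgroup G A -> (forall x, A x -> H (f x)) ->
  (forall x, A x -> congr_mod M (f x) (g x)) -> hom_modulo A M f -> hom_modulo A M g.
Proof.
  intros HA f_H Efg f_hom x y Ax Ay.
  apply (congr_trans HN _ (f (x · y))); [apply (congr_sym HN), Efg, groupM; auto|].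
  apply (congr_trans HN _ (f x · f y)); [apply f_hom; auto|].
  apply (congr_mul HN); auto.
Qed.

Lemma choice_on {X : Type} {Y : group} (P : X -> Prop) (R : X -> Y -> Prop) :
  (forall x, P x -> exists y, R x y) -> exists g : X -> Y, forall x, P x -> R x (g x).
Proof.
  intros HR. assert (HR' : forall x, exists y, P x -> R x y).
  { intros x. destruct (classic (P x)) as [Px|nPx].
    - destruct (HR x Px) as [y Hy]. eauto.
    - exists gone. contradiction. }
  exists (fun x => proj1_sig (constructive_indefinite_description _ (HR' x))).
  intros x. apply (proj2_sig (constructive_indefinite_description _ (HR' x))).
Qed.

(** * Elementary amenable groups *)

(* Working modulo a normal subgroup [M] of the range [H] is what lets the
   property pass to quotients: a set-theoretic lift of a homomorphism through
   a surjection is only a homomorphism modulo its kernel. *)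
Definition fin_gen_kernels (Q : group) : Prop :=
  forall G : group, ~ has_free_subsemigroup2 G ->
  forall A : G -> Prop, fin_gen_subgroup G A ->
  forall H M : Q -> Prop, normal_in Q H M ->
  forall f : G -> Q, (forall x, A x -> H (f x)) -> hom_modulo A M f ->
  fin_gen_subgroup G (fun x => A x /\ M (f x)).

Lemma fin_gen_kernels_finite (Q : group) : finite_group Q -> fin_gen_kernels Q.
Proof.
  intros [lq Hlq] G NF A HfgA H M HN f f_H f_hom.
  assert (HA : is_subgroup G A) by (apply fin_gen_subgroup_subgroup; auto).
  destruct HfgA as [lA [_ A_gen]].
  destruct (list_choice A (fun q t => (exists a, A a /\ f a = q) -> f t = q) lq)
    as [T [T_sub_A HT]].
  { intros q _. destruct (classic (exists a, A a /\ f a = q)) as [[a [Aa <-]]|Hq].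
    - exists a. auto.
    - exists gone. split; [apply group1; auto|]. contradiction. }
  apply (schreier_fin_gen A _ lA T); auto.
  - apply (is_subgroup_kernel HN); auto.
  - intros x [Ax _]. auto.
  - intros a Aa. destruct (HT (f a) (Hlq _)) as [t [Ht Et]]. specialize (Et (ex_intro _ a (conj Aa eq_refl))).
    exists t. split; auto. split; [apply groupMV; auto|].
    apply congr_mod_1, (congr_sym HN).
    replace gone with (f a · (f t)⁻¹) by (rewrite Et; apply mulgV).
    apply (hom_modulo_MV HN HA f_H f_hom); auto.
Qed.

Lemma fin_gen_kernels_abelian (Q : group) : abelian_group Q -> fin_gen_kernels Q.
Proof.
  intros Hab G NF A HfgA H M HN f f_H f_hom.
  assert (HA : is_subgroup G A) by (apply fin_gen_subgroup_subgroup; auto).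
  destruct HfgA as [lA [_ A_gen]].
  apply (fin_gen_above_commutators A _ lA); auto.
  - apply (is_subgroup_kernel HN); auto.
  - intros x [Ax _]. auto.
  - intros x y Ax Ay.
    (* [x⁻¹ y⁻¹ x y = (y x)⁻¹ (x y)] and [f (y x) = f y f x = f x f y = f (x y)] modulo [M] *)
    replace (x⁻¹ · y⁻¹ · x · y) with ((y · x)⁻¹ · (x · y)) by (rewrite invMg, !gmulA; reflexivity).
    split; [apply (groupM _ HA); [apply (groupV _ HA)|]; apply (groupM _ HA); auto|].
    apply (kernel_of_congr HN HA f_H f_hom); [apply (groupM _ HA); auto ..|].
    apply (congr_trans HN _ (f y · f x)); [apply f_hom; auto|].
    rewrite Hab. apply (congr_sym HN), f_hom; auto.
Qed.

Lemma fin_gen_kernels_sub (L K : group) (e : K -> L) :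
  is_hom K L e -> injective e -> fin_gen_kernels L -> fin_gen_kernels K.
Proof.
  intros He e_inj IH G NF A HfgA H M HN f f_H f_hom.
  apply (fin_gen_subgroup_ext (fun x => A x /\ img e M (e (f x)))).
  - intros x. split.
    + intros [Ax [m [Mm Em]]]. apply e_inj in Em. subst. auto.
    + intros [Ax Mx]. split; auto. exists (f x). auto.
  - apply (IH G NF A HfgA _ _ (normal_in_img e H M He HN)).
    + intros x Ax. exists (f x). auto.
    + apply hom_modulo_img; auto.
Qed.

Lemma fin_gen_kernels_quot (L Q : group) (p : L -> Q) :
  is_hom L Q p -> surjective p -> fin_gen_kernels L -> fin_gen_kernels Q.
Proof.
  intros Hp p_surj IH G NF A HfgA H M HN f f_H f_hom.
  destruct (choice_on (fun _ => True) (fun x y => p y = f x)) as [lift Hlift].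
  { intros x _. apply p_surj. }
  apply (fin_gen_subgroup_ext (fun x => A x /\ M (p (lift x)))).
  - intros x. rewrite Hlift; tauto.
  - apply (IH G NF A HfgA _ _ (normal_in_preim p H M Hp HN)).
    + intros x Ax. rewrite Hlift; auto.
    + apply hom_modulo_preim; auto. intros x y Ax Ay. rewrite !Hlift; auto.
Qed.

(* First solve the problem in [Q]; on the resulting kernel [A1], [f] lands in
   [M · i K] and can be moved into [i K] without changing it modulo [M]. *)
Lemma fin_gen_kernels_ext (K L Q : group) (i : K -> L) (p : L -> Q) :
  is_hom K L i -> injective i -> is_hom L Q p -> surjective p ->
  (forall x : L, p x = gone <-> exists k, i k = x) ->
  fin_gen_kernels K -> fin_gen_kernels Q -> fin_gen_kernels L.
Proof.
  intros Hi _ Hp _ Hker IHK IHQ G NF A HfgA H M HN f f_H f_hom.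
  assert (HA : is_subgroup G A) by (apply fin_gen_subgroup_subgroup; auto).
  set (A1 := fun x => A x /\ img p M (p (f x))).
  assert (A1_fg : fin_gen_subgroup G A1).
  { apply (IHQ G NF A HfgA _ _ (normal_in_img p H M Hp HN)).
    - intros x Ax. exists (f x). auto.
    - apply hom_modulo_img; auto. }
  destruct (choice_on A1 (fun x k => congr_mod M (f x) (i k))) as [g Hg].
  { intros x [Ax [m [Mm Em]]].
    assert (E : p (m⁻¹ · f x) = gone) by (rewrite Hp, hom_inv, Em, gmulVl; auto).
    apply Hker in E. destruct E as [k Ek]. exists k. rewrite Ek.
    unfold congr_mod. rewrite gmulA.
    apply HN; [apply f_H; auto | apply (groupV _ (proj1 (proj2 HN))); auto]. }
  assert (g_H : forall x, A1 x -> H (i (g x))).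
  { intros x Hx. apply (congr_H HN (f x)); [apply Hg|apply f_H]; apply Hx. }
  apply (fin_gen_subgroup_ext (fun x => A1 x /\ M (i (g x)))).
  - intros x. split.
    + intros [A1x Mx]. split; [apply A1x|]. apply (congr_M_iff HN _ _ (Hg x A1x)). exact Mx.
    + intros [Ax Mx]. assert (A1x : A1 x) by (split; auto; exists (f x); auto).
      split; auto. apply (congr_M_iff HN _ _ (Hg x A1x)). exact Mx.
  - apply (IHK G NF A1 A1_fg _ _ (normal_in_preim i H M Hi HN)); auto.
    apply hom_modulo_preim; auto.
    apply (hom_modulo_congr HN A1 f); auto.
    + apply fin_gen_subgroup_subgroup; auto.
    + intros x Hx. apply f_H, Hx.
    + intros x y Hx Hy. apply f_hom; [apply Hx|apply Hy].
Qed.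

Lemma directed_cover_list {I : Type} {L : group} {Hf : I -> Type} (e : forall j, Hf j -> L) :
  (forall j1 j2, exists k, (forall y, exists z, e k z = e j1 y) /\
                           (forall y, exists z, e k z = e j2 y)) ->
  (forall x : L, exists j y, e j y = x) ->
  forall xs : list L, exists k, forall x, In x xs -> exists z, e k z = x.
Proof.
  intros Hdir Hcov xs. induction xs as [|x xs [k Hk]].
  - destruct (Hcov gone) as [j _]. exists j. intros x [].
  - destruct (Hcov x) as [j [y <-]]. destruct (Hdir j k) as [k' [H1 H2]]. exists k'.
    intros x' [<-|Hx']; [apply H1|]. destruct (Hk x' Hx') as [z <-]. apply H2.
Qed.

Lemma fin_gen_kernels_union (L : group) (I : Type) (Hf : I -> group)
    (e : forall j, Hf j -> L) :
  (forall j, is_hom (Hf j) L (e j)) ->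
  (forall j1 j2, exists k, (forall y, exists z, e k z = e j1 y) /\
                           (forall y, exists z, e k z = e j2 y)) ->
  (forall x : L, exists j y, e j y = x) ->
  (forall j, fin_gen_kernels (Hf j)) -> fin_gen_kernels L.
Proof.
  intros He Hdir Hcov IH G NF A HfgA H M HN f f_H f_hom.
  assert (HA : is_subgroup G A) by (apply fin_gen_subgroup_subgroup; auto).
  pose proof HfgA as [lA [_ A_gen]].
  destruct (directed_cover_list e Hdir Hcov (map f lA)) as [k Hk].
  assert (Cov : forall a, A a -> exists z, congr_mod M (f a) (e k z)).
  { intros a Aa. apply A_gen in Aa.
    cut (A a /\ exists y, img (e k) (fun _ => True) y /\ congr_mod M (f a) y).
    { intros [_ [y [[z [_ <-]] E]]]. eauto. }
    revert a Aa. apply gen_min.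
    - apply (is_subgroup_congr_img HN); auto. apply is_subgroup_img; auto.
      split; [|split]; auto.
    - intros a Ha. split; [apply A_gen, mem_gen; auto|]. destruct (Hk (f a)) as [z Ez]; [apply in_map; auto|].
      exists (f a). split; [exists z; auto|apply (congr_refl HN)]. }
  destruct (choice_on A (fun a z => congr_mod M (f a) (e k z)) Cov) as [g Hg].
  apply (fin_gen_subgroup_ext (fun x => A x /\ M (e k (g x)))).
  - intros x. split; intros [Ax Mx]; split; auto; apply (congr_M_iff HN _ _ (Hg x Ax)), Mx.
  - apply (IH k G NF A HfgA _ _ (normal_in_preim (e k) H M (He k) HN)).
    + intros x Ax. apply (congr_H HN (f x)); auto.
    + apply hom_modulo_preim; auto. apply (hom_modulo_congr HN A f); auto.
Qed.

Lemma fin_gen_kernels_elem_amenable (Q : group) : elem_amenable Q -> fin_gen_kernels Q.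
Proof.
  induction 1.
  - apply fin_gen_kernels_finite; auto.
  - apply fin_gen_kernels_abelian; auto.
  - eapply fin_gen_kernels_sub; eauto.
  - eapply fin_gen_kernels_quot; eauto.
  - eapply fin_gen_kernels_ext; eauto.
  - eapply fin_gen_kernels_union; eauto.
Qed.

Lemma normal_in_trivial (Q : group) : normal_in Q (fun _ => True) (fun q => q = gone).
Proof.
  split; [|split; [|split]].
  - split; auto.
  - split; [|split]; auto.
    + intros x y -> ->. apply gmul1l.
    + intros x ->. apply invg1.
  - auto.
  - intros h m _ ->. rewrite mulg1, gmulVl. reflexivity.
Qed.

Theorem mainTheorem2 (G : group) (N : G -> Prop) :
  fin_gen G -> ~ has_free_subsemigroup2 G -> is_normal G N ->
  quotient_elem_amenable G N -> fin_gen_subgroup G N.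
Proof.
  intros [l Hl] NF _ [Q [f [Hf [_ [HN HQ]]]]].
  apply (fin_gen_subgroup_ext (fun x => True /\ f x = gone)); [intros x; rewrite HN; tauto|].
  assert (HG : fin_gen_subgroup G (fun _ => True)) by (exists l; split; auto; firstorder).
  apply (fin_gen_kernels_elem_amenable Q HQ G NF _ HG _ _ (normal_in_trivial Q) f); auto.
  intros x y _ _. unfold congr_mod. rewrite Hf, gmulVl. reflexivity.
Qed.
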